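(* Let $q\in\,]0,1[$, $\omega\ge0$, let $I$ be an interval containing $\omega_0:=\omega/(1-q)$, $\alpha,\beta\in\mathbb{R}$, and suppose $a,b\in I$ with $a<b$ and $a,b\in[c]_{q,\omega}$ for some $c\in I$. Let $L:I\times\mathbb{R}\times\mathbb{R}\to\mathbb{R}$ satisfy: (H1) for every $t\in I$, $(u,v)\mapsto L(t,u,v)$ is $C^1(\mathbb{R}^2,\mathbb{R})$; (H2) for every admissible $y$, $t\mapsto L(t,y(\sigma(t)),\tilde D_{q,\omega}[y](t))$ is continuous at $\omega_0$; (H3) for every admissible $y$, $t\mapsto\partial_2L(t,y(\sigma(t)),\tilde D_{q,\omega}[y](t))$ and $t\mapsto\partial_3L(t,y(\sigma(t)),\tilde D_{q,\omega}[y](t))$ belong to $\mathcal{Y}^1([a,b]_{q,\omega},\mathbb{R})$. Assume $L$ is jointly convex (resp. jointly concave) in $(u,v)$. If an admissible function $y_*$ satisfies, for all $t\in[a,b]_{q,\omega}$, $$\partial_2L\bigl(t,y_*(\sigma(t)),\tilde D_{q,\omega}[y_*](t)\bigr)=\tilde D_{q,\omega}\Bigl[\tau\mapsto\partial_3L\bigl(\sigma(\tau),y_*(\sigma^2(\tau)),\tilde D_{q,\omega}[y_*](\sigma(\tau))\bigr)\Bigr](t),$$ then $y_*$ is a global minimizer (resp. maximizer) of problem (P), i.e. $\mathcal{L}(y_* )\le\mathcal{L}(y)$ (resp. $\ge$) for every admissible $y$.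
   Context: $\sigma(t):=qt+\omega$, $\sigma^{-1}(t):=q^{-1}(t-\omega)$, $\sigma^k$ the $k$-fold composition. Hahn symmetric derivative: for $t\neq\omega_0$, $\tilde D_{q,\omega}[f](t):=\frac{f(\sigma(t))-f(\sigma^{-1}(t))}{\sigma(t)-\sigma^{-1}(t)}$; $\tilde D_{q,\omega}[f](\omega_0):=f'(\omega_0)$ (classical). Hahn symmetric integral: $\int_{\omega_0}^xF\,\tilde d_{q,\omega}t:=(\sigma^{-1}(x)-\sigma(x))\sum_{n\ge0}q^{2n+1}F(\sigma^{2n+1}(x))$, $\int_a^bF\,\tilde d_{q,\omega}t:=\int_{\omega_0}^bF\,\tilde d_{q,\omega}t-\int_{\omega_0}^aF\,\tilde d_{q,\omega}t$. $[s]_{q,\omega}:=\{\sigma^{2n+1}(s):n\in\mathbb{N}_0\}\cup\{\omega_0\}$, $[a,b]_{q,\omega}:=[a]_{q,\omega}\cup[b]_{q,\omega}$. $\mathcal{Y}^1([a,b]_{q,\omega},\mathbb{R})$: functions $y:I\to\mathbb{R}$ with $y$ and $\tilde D_{q,\omega}[y]$ bounded on $[a,b]_{q,\omega}$ and continuous at $\omega_0$. Problem (P): extremize $\mathcal{L}(y):=\int_a^bL(t,y(\sigma(t)),\tilde D_{q,\omega}[y](t))\,\tilde d_{q,\omega}t$ over admissible $y$, i.e. $y\in\mathcal{Y}^1([a,b]_{q,\omega},\mathbb{R})$ with $y(a)=\alpha$, $y(b)=\beta$. $L$ is jointly convex (resp. concave) in $(u,v)$ if $\partial_2L,\partial_3L$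 exist, are continuous, and $L(t,u+u_1,v+v_1)-L(t,u,v)\ge$ (resp. $\le$) $\partial_2L(t,u,v)u_1+\partial_3L(t,u,v)v_1$ for all $(t,u,v),(t,u+u_1,v+v_1)\in I\times\mathbb{R}^2$. $\partial_jL$ is the partial derivative in the $j$-th argument. *)

From Stdlib Require Import Reals.
From Coquelicot Require Import Coquelicot.
Open Scope R_scope.

Definition hsigma (q w t : R) : R := q * t + w.
Definition hsigma_inv (q w t : R) : R := (t - w) / q.
Definition hsigma_iter (q w : R) (k : nat) (t : R) : R := Nat.iter k (hsigma q w) t.
Definition omega0 (q w : R) : R := w / (1 - q).

Definition hahn_D (q w : R) (f : R -> R) (t : R) : R :=
  if Req_EM_T t (omega0 q w) then Derive f t
  else (f (hsigma q w t) - f (hsigma_inv q w t)) / (hsigma q w t - hsigma_inv q w t).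

Definition hahn_int_from (q w : R) (F : R -> R) (x : R) : R :=
  (hsigma_inv q w x - hsigma q w x) *
  Series (fun n : nat => q ^ (2 * n + 1) * F (hsigma_iter q w (2 * n + 1) x)).
Definition hahn_int (q w a b : R) (F : R -> R) : R :=
  hahn_int_from q w F b - hahn_int_from q w F a.

Definition qw_set (q w s : R) (t : R) : Prop :=
  (exists n : nat, t = hsigma_iter q w (2 * n + 1) s) \/ t = omega0 q w.
Definition qw_set2 (q w a b : R) (t : R) : Prop := qw_set q w a t \/ qw_set q w b t.

Definition is_interval (I : R -> Prop) : Prop :=
  forall x y z, I x -> I z -> x <= y <= z -> I y.

Definition bounded_on (S : R -> Prop) (f : R -> R) : Prop :=
  exists M, forall t, S t -> Rabs (f t) <= M.

(* Y^1([a,b]_{q,w}, R): y and D[y] bounded on [a,b]_{q,w} and continuous at omega0.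
   (D[y](omega0) = y'(omega0) must exist for D[y] to be defined.) *)
Definition Y1 (q w a b : R) (y : R -> R) : Prop :=
  bounded_on (qw_set2 q w a b) y /\
  bounded_on (qw_set2 q w a b) (hahn_D q w y) /\
  ex_derive y (omega0 q w) /\
  continuous y (omega0 q w) /\
  continuous (hahn_D q w y) (omega0 q w).

Definition admissible (q w a b alpha beta : R) (y : R -> R) : Prop :=
  Y1 q w a b y /\ y a = alpha /\ y b = beta.

Definition d2L (L : R -> R -> R -> R) (t u v : R) : R := Derive (fun u' => L t u' v) u.
Definition d3L (L : R -> R -> R -> R) (t u v : R) : R := Derive (fun v' => L t u v') v.

Definition C1_in_uv (L : R -> R -> R -> R) (t : R) : Prop :=
  forall u v : R,
    ex_derive (fun u' => L t u' v) u /\ ex_derive (fun v' => L t u v') v /\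
    continuous (fun p : R * R => d2L L t (fst p) (snd p)) (u, v) /\
    continuous (fun p : R * R => d3L L t (fst p) (snd p)) (u, v).

Definition jointly_convex (I : R -> Prop) (L : R -> R -> R -> R) : Prop :=
  (forall t, I t -> C1_in_uv L t) /\
  forall t u v u1 v1, I t ->
    L t (u + u1) (v + v1) - L t u v >= d2L L t u v * u1 + d3L L t u v * v1.

Definition jointly_concave (I : R -> Prop) (L : R -> R -> R -> R) : Prop :=
  (forall t, I t -> C1_in_uv L t) /\
  forall t u v u1 v1, I t ->
    L t (u + u1) (v + v1) - L t u v <= d2L L t u v * u1 + d3L L t u v * v1.

Definition lag_comp (q w : R) (L : R -> R -> R -> R) (y : R -> R) (t : R) : R :=
  L t (y (hsigma q w t)) (hahn_D q w y t).
Definition functional (q w a b : R) (L : R -> R -> R -> R) (y : R -> R) : R :=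
  hahn_int q w a b (lag_comp q w L y).

(* The Hahn integral from ω₀ to x is a series along the orbit σ^(2n+1) x, which
   converges to the fixed point ω₀ of σ. For h continuous at ω₀ the series of the
   symmetric derivative D[h] telescopes, so its integral from ω₀ to x is h x - h ω₀.
   With g t := ∂₃L(t, ystar(σ t), D[ystar](t)), the Hahn product rule and the
   Euler–Lagrange equation turn the first-order term ∂₂L·(y - ystar)∘σ + ∂₃L·D[y - ystar]
   of joint convexity into D[(g∘σ)·(y - ystar)], whose integral over [a, b] vanishes
   because y = ystar at a and b. Positivity of the integral from a to b holds because a
   and b lie on one orbit [c]: one is an even iterate of the other, and the difference
   of the two integrals is a partial sum of nonnegative terms. The concave case is the
   same argument with y and ystar exchanged. *)

From Stdlib Require Import Reals Lra Lia.
From Coquelicot Require Import Coquelicot.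
Open Scope R_scope.

Section HahnCalculus.

Variables q w : R.
Hypothesis hq : 0 < q < 1.

Local Notation σ := (hsigma q w).
Local Notation ω₀ := (omega0 q w).

Lemma hsigma_sub_omega0 t : σ t - ω₀ = q * (t - ω₀).
Proof. unfold hsigma, omega0. field. lra. Qed.

Lemma hsigma_omega0 : σ ω₀ = ω₀.
Proof. pose proof (hsigma_sub_omega0 ω₀). lra. Qed.

Lemma hsigma_hsigma_inv t : σ (hsigma_inv q w t) = t.
Proof. unfold hsigma, hsigma_inv. field. lra. Qed.

Lemma hsigma_inv_hsigma t : hsigma_inv q w (σ t) = t.
Proof. unfold hsigma, hsigma_inv. field. lra. Qed.

Lemma hsigma_inv_sub_hsigma t : hsigma_inv q w t - σ t = (/ q - q) * (t - ω₀).
Proof. unfold hsigma_inv, hsigma, omega0. field. lra. Qed.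

Lemma invq_sub_q_gt0 : 0 < / q - q.
Proof.
  assert (0 < / q) by (apply Rinv_0_lt_compat; lra).
  assert (q * / q = 1) by (field; lra).
  nra.
Qed.

Lemma hsigma_iter_sub_omega0 k x : hsigma_iter q w k x - ω₀ = q ^ k * (x - ω₀).
Proof.
  induction k as [|k IHk]; [simpl; ring|].
  change (σ (hsigma_iter q w k x) - ω₀ = q * q ^ k * (x - ω₀)).
  rewrite hsigma_sub_omega0, IHk. ring.
Qed.

Lemma hsigma_iter_add m n x :
  hsigma_iter q w (m + n) x = hsigma_iter q w m (hsigma_iter q w n x).
Proof. apply Nat.iter_add. Qed.

Lemma hsigma_iter_neq_omega0 k x : x <> ω₀ -> hsigma_iter q w k x <> ω₀.
Proof.
  intros hx E. pose proof (hsigma_iter_sub_omega0 k x) as H.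
  pose proof (pow_lt q k (proj1 hq)).
  rewrite E, Rminus_diag in H. symmetry in H.
  apply Rmult_integral in H as [H|H]; lra.
Qed.

Lemma hsigma_iter_between k x :
  (x <= ω₀ -> x <= hsigma_iter q w k x <= ω₀) /\
  (ω₀ <= x -> ω₀ <= hsigma_iter q w k x <= x).
Proof.
  assert (q ^ k <= 1) by (induction k; simpl; nra).
  pose proof (hsigma_iter_sub_omega0 k x).
  pose proof (pow_lt q k (proj1 hq)).
  split; intro hx; nra.
Qed.

Lemma is_lim_seq_hsigma_iter k x :
  is_lim_seq (fun n => hsigma_iter q w (2 * n + k) x) ω₀.
Proof.
  apply is_lim_seq_ext with (fun n => ω₀ + (q ^ 2) ^ n * (q ^ k * (x - ω₀))).
  { intro n. pose proof (hsigma_iter_sub_omega0 (2 * n + k) x).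
    rewrite pow_add, pow_mult in H. lra. }
  replace (Finite ω₀) with (Finite (ω₀ + 0 * (q ^ k * (x - ω₀)))) by (f_equal; ring).
  apply is_lim_seq_plus'; [apply is_lim_seq_const|].
  apply is_lim_seq_mult'; [|apply is_lim_seq_const].
  apply is_lim_seq_geom. rewrite Rabs_pos_eq; nra.
Qed.

Lemma is_lim_seq_comp_hsigma_iter (F : R -> R) k x : continuous F ω₀ ->
  is_lim_seq (fun n => F (hsigma_iter q w (2 * n + k) x)) (F ω₀).
Proof. intros HF. eapply filterlim_comp; [apply is_lim_seq_hsigma_iter | exact HF]. Qed.

Lemma continuous_comp_hsigma (F : R -> R) :
  continuous F ω₀ -> continuous (fun t => F (σ t)) ω₀.
Proof.
  intros HF. apply continuous_comp.
  - apply (@ex_derive_continuous R_AbsRing R_NormedModule). unfold hsigma. auto_derive. exact I.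
  - rewrite hsigma_omega0. exact HF.
Qed.

Definition hahn_terms (F : R -> R) (x : R) (n : nat) : R :=
  q ^ (2 * n + 1) * F (hsigma_iter q w (2 * n + 1) x).

Definition hahn_integrable (F : R -> R) : Prop := forall x, ex_series (hahn_terms F x).

Lemma hahn_int_from_eq F x :
  hahn_int_from q w F x = (/ q - q) * (x - ω₀) * Series (hahn_terms F x).
Proof. unfold hahn_int_from. rewrite hsigma_inv_sub_hsigma. reflexivity. Qed.

Lemma hahn_int_from_omega0 F : hahn_int_from q w F ω₀ = 0.
Proof. rewrite hahn_int_from_eq. ring. Qed.

Lemma hahn_integrable_continuous (F : R -> R) : continuous F ω₀ -> hahn_integrable F.
Proof.
  intros HF x.
  destruct (@filterlim_bounded R_AbsRing R_NormedModule
              (fun n => F (hsigma_iter q w (2 * n + 1) x)))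
    as [M HM]; [exists (F ω₀); apply is_lim_seq_comp_hsigma_iter, HF|].
  apply (@ex_series_le R_AbsRing R_CompleteNormedModule _
           (fun n => scal (M * q) ((q ^ 2) ^ n))).
  - intro n. change (Rabs (hahn_terms F x n) <= M * q * (q ^ 2) ^ n).
    specialize (HM n). change (Rabs (F (hsigma_iter q w (2 * n + 1) x)) <= M) in HM.
    unfold hahn_terms. rewrite Rabs_mult, Rabs_pos_eq by (apply pow_le; lra).
    rewrite pow_add, pow_mult, pow_1.
    pose proof (pow_lt (q ^ 2) n ltac:(nra)).
    apply Rmult_le_compat_l with (r := q * (q ^ 2) ^ n) in HM; nra.
  - apply (@ex_series_scal_l R_AbsRing R_NormedModule), ex_series_geom. rewrite Rabs_pos_eq; nra.
Qed.

(* [hahn_D h ω₀] is a classical derivative, not covered by any continuity hypothesis;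
   at ω₀ the orbit is constant, so every function is integrable there. *)
Lemma ex_series_hahn_terms_omega0 F : ex_series (hahn_terms F ω₀).
Proof.
  apply (ex_series_ext (hahn_terms (fun _ => F ω₀) ω₀)).
  - intro n. unfold hahn_terms.
    pose proof (hsigma_iter_sub_omega0 (2 * n + 1) ω₀) as H.
    replace (hsigma_iter q w (2 * n + 1) ω₀) with ω₀ by lra. reflexivity.
  - apply hahn_integrable_continuous, continuous_const.
Qed.

Lemma hahn_D_neq_omega0 f t : t <> ω₀ ->
  hahn_D q w f t = (f (σ t) - f (hsigma_inv q w t)) / (σ t - hsigma_inv q w t).
Proof. intros ht. unfold hahn_D. destruct Req_EM_T; [contradiction | reflexivity]. Qed.

Lemma hahn_D_minus f g t : t <> ω₀ ->
  hahn_D q w (fun s => f s - g s) t = hahn_D q w f t - hahn_D q w g t.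
Proof. intros ht. rewrite !hahn_D_neq_omega0 by exact ht. unfold Rdiv. ring. Qed.

Lemma hahn_D_mult f g t : t <> ω₀ ->
  hahn_D q w (fun s => f s * g s) t =
  hahn_D q w f t * g (σ t) + f (hsigma_inv q w t) * hahn_D q w g t.
Proof. intros ht. rewrite !hahn_D_neq_omega0 by exact ht. unfold Rdiv. ring. Qed.

Lemma hahn_terms_hahn_D h x n : x <> ω₀ ->
  hahn_terms (hahn_D q w h) x n =
  (h (hsigma_iter q w (2 * n) x) - h (hsigma_iter q w (2 * n + 2) x)) / ((/ q - q) * (x - ω₀)).
Proof.
  intros hx. unfold hahn_terms.
  set (y := hsigma_iter q w (2 * n) x).
  replace (hsigma_iter q w (2 * n + 1) x) with (σ y)
    by (unfold y; rewrite Nat.add_comm; reflexivity).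
  replace (hsigma_iter q w (2 * n + 2) x) with (σ (σ y))
    by (unfold y; rewrite Nat.add_comm; reflexivity).
  assert (hy : σ y <> ω₀) by (apply (hsigma_iter_neq_omega0 (S (2 * n))); exact hx).
  rewrite hahn_D_neq_omega0, hsigma_inv_hsigma by exact hy.
  assert (Ey : y - ω₀ = q ^ (2 * n) * (x - ω₀)) by apply hsigma_iter_sub_omega0.
  replace (σ (σ y) - y) with ((σ (σ y) - ω₀) - (y - ω₀)) by ring.
  rewrite !hsigma_sub_omega0.
  rewrite Ey, pow_add.
  pose proof (pow_lt q (2 * n) (proj1 hq)). pose proof invq_sub_q_gt0.
  field. repeat split; try lra.
  - nra.
  - replace (_ - _) with ((q * q - 1) * q ^ (2 * n) * (x - ω₀)) by ring.
    repeat apply Rmult_integral_contrapositive_currified; nra.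
Qed.

Lemma is_series_hahn_terms_hahn_D (h : R -> R) x : x <> ω₀ -> continuous h ω₀ ->
  is_series (hahn_terms (hahn_D q w h) x) ((h x - h ω₀) / ((/ q - q) * (x - ω₀))).
Proof.
  intros hx Hh. set (K := (/ q - q) * (x - ω₀)).
  assert (Hsum : forall n, @eq R (sum_n (hahn_terms (hahn_D q w h) x) n)
                                ((h x - h (hsigma_iter q w (2 * n + 2) x)) / K)).
  { induction n as [|n IHn].
    - rewrite sum_O, hahn_terms_hahn_D by exact hx. reflexivity.
    - rewrite sum_Sn, IHn, hahn_terms_hahn_D by exact hx.
      replace (2 * S n)%nat with (2 * n + 2)%nat by lia.
      change (plus ?u ?v) with (u + v). unfold K, Rdiv. ring. }
  change (is_lim_seq (sum_n (hahn_terms (hahn_D q w h) x)) ((h x - h ω₀) / K)).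
  apply (is_lim_seq_ext _ _ _ (fun n => eq_sym (Hsum n))).
  apply is_lim_seq_mult'; [|apply is_lim_seq_const].
  apply is_lim_seq_minus'; [apply is_lim_seq_const|].
  apply is_lim_seq_comp_hsigma_iter, Hh.
Qed.

Lemma hahn_int_from_hahn_D (h : R -> R) x : continuous h ω₀ ->
  hahn_int_from q w (hahn_D q w h) x = h x - h ω₀.
Proof.
  intros Hh. destruct (Req_EM_T x ω₀) as [->|hx].
  - rewrite hahn_int_from_omega0. ring.
  - rewrite hahn_int_from_eq, (is_series_unique _ _ (is_series_hahn_terms_hahn_D h x hx Hh)).
    pose proof invq_sub_q_gt0. field. repeat split; try lra. nra.
Qed.

Lemma hahn_int_hahn_D a b (h : R -> R) : continuous h ω₀ ->
  hahn_int q w a b (hahn_D q w h) = h b - h a.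
Proof. intros Hh. unfold hahn_int. rewrite !hahn_int_from_hahn_D by exact Hh. ring. Qed.

Lemma hahn_integrable_hahn_D (h : R -> R) : continuous h ω₀ -> hahn_integrable (hahn_D q w h).
Proof.
  intros Hh x. destruct (Req_EM_T x ω₀) as [->|hx].
  - apply ex_series_hahn_terms_omega0.
  - eexists. apply is_series_hahn_terms_hahn_D; assumption.
Qed.

Lemma hahn_terms_minus F G x n :
  hahn_terms (fun t => F t - G t) x n = hahn_terms F x n - hahn_terms G x n.
Proof. unfold hahn_terms. ring. Qed.

Lemma hahn_integrable_minus F G : hahn_integrable F -> hahn_integrable G ->
  hahn_integrable (fun t => F t - G t).
Proof.
  intros HF HG x.
  apply (ex_series_ext (fun n => hahn_terms F x n - hahn_terms G x n)).
  - intro n. symmetry. apply hahn_terms_minus.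
  - exact (ex_series_minus _ _ (HF x) (HG x)).
Qed.

Lemma hahn_int_minus a b F G : hahn_integrable F -> hahn_integrable G ->
  hahn_int q w a b (fun t => F t - G t) = hahn_int q w a b F - hahn_int q w a b G.
Proof.
  intros HF HG. unfold hahn_int. rewrite !hahn_int_from_eq.
  rewrite !(Series_ext _ _ (hahn_terms_minus F G _)).
  rewrite !Series_minus by auto. ring.
Qed.

Lemma hahn_int_from_hsigma2 G x : ex_series (hahn_terms G x) ->
  hahn_int_from q w G x =
  (/ q - q) * (x - ω₀) * q * G (σ x) + hahn_int_from q w G (σ (σ x)).
Proof.
  intros HG. rewrite !hahn_int_from_eq, Series_incr_1 by exact HG.
  rewrite (Series_ext _ (fun n => q ^ 2 * hahn_terms G (σ (σ x)) n)).
  2:{ intro n. unfold hahn_terms.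
      replace (2 * S n + 1)%nat with ((2 * n + 1) + 2)%nat by lia.
      rewrite pow_add, hsigma_iter_add. simpl. ring. }
  rewrite Series_scal_l, !hsigma_sub_omega0. unfold hahn_terms. simpl. ring.
Qed.

Lemma hahn_int_from_sign G x : ex_series (hahn_terms G x) ->
  (forall n, 0 <= G (hsigma_iter q w (2 * n + 1) x)) ->
  0 <= (x - ω₀) * hahn_int_from q w G x.
Proof.
  intros HG Hpos. rewrite hahn_int_from_eq.
  assert (HS : 0 <= Series (hahn_terms G x)).
  { rewrite <- (Rmult_0_l (Series (hahn_terms G x))), <- Series_scal_l.
    apply Series_le; [|exact HG]. intro n. unfold hahn_terms.
    pose proof (pow_lt q (2 * n + 1) (proj1 hq)). specialize (Hpos n). nra. }
  pose proof invq_sub_q_gt0.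
  replace ((x - ω₀) * ((/ q - q) * (x - ω₀) * Series (hahn_terms G x)))
    with ((/ q - q) * ((x - ω₀) * (x - ω₀)) * Series (hahn_terms G x)) by ring.
  apply Rmult_le_pos; [|exact HS]. apply Rmult_le_pos; [lra | apply Rle_0_sqr].
Qed.

Lemma hahn_int_from_sub_hsigma_iter_sign G x j : hahn_integrable G ->
  (forall n, 0 <= G (hsigma_iter q w (2 * n + 1) x)) ->
  0 <= (x - ω₀) * (hahn_int_from q w G x - hahn_int_from q w G (hsigma_iter q w (2 * j) x)).
Proof.
  intros HG Hpos. induction j as [|j IH]; [simpl; lra|].
  set (y := hsigma_iter q w (2 * j) x) in IH.
  replace (hsigma_iter q w (2 * S j) x) with (σ (σ y))
    by (unfold y; replace (2 * S j)%nat with (2 + 2 * j)%nat by lia; reflexivity).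
  assert (Gy : 0 <= G (σ y)).
  { replace (σ y) with (hsigma_iter q w (2 * j + 1) x)
      by (unfold y; rewrite Nat.add_comm; reflexivity).
    apply Hpos. }
  assert (Ey : y - ω₀ = q ^ (2 * j) * (x - ω₀)) by apply hsigma_iter_sub_omega0.
  pose proof (hahn_int_from_hsigma2 G y (HG y)) as Hstep.
  assert (0 <= (/ q - q) * q * G (σ y) * q ^ (2 * j) * ((x - ω₀) * (x - ω₀))).
  { pose proof invq_sub_q_gt0. pose proof (pow_lt q (2 * j) (proj1 hq)).
    apply Rmult_le_pos; [|apply Rle_0_sqr]. repeat apply Rmult_le_pos; lra. }
  replace ((x - ω₀) * (hahn_int_from q w G x - hahn_int_from q w G (σ (σ y))))
    with ((x - ω₀) * (hahn_int_from q w G x - hahn_int_from q w G y)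
          + (/ q - q) * q * G (σ y) * q ^ (2 * j) * ((x - ω₀) * (x - ω₀)))
    by (rewrite Hstep, Ey; ring).
  lra.
Qed.

Lemma qw_set_even_shift c a b :
  qw_set q w c a -> qw_set q w c b -> a <> ω₀ -> b <> ω₀ ->
  exists j, a = hsigma_iter q w (2 * j) b \/ b = hsigma_iter q w (2 * j) a.
Proof.
  intros [[m ->] | ->] [[k ->] | ->] ha hb; try congruence.
  destruct (Nat.le_gt_cases k m).
  - exists (m - k)%nat. left. rewrite <- hsigma_iter_add. f_equal. lia.
  - exists (k - m)%nat. right. rewrite <- hsigma_iter_add. f_equal. lia.
Qed.

(* Only the odd orbits of a and b enter, and they avoid ω₀ unless a or b is ω₀. *)
Lemma hahn_int_nonneg a b c G : a < b -> qw_set q w c a -> qw_set q w c b ->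
  hahn_integrable G -> (forall t, qw_set2 q w a b t -> t <> ω₀ -> 0 <= G t) ->
  0 <= hahn_int q w a b G.
Proof.
  intros hab hca hcb HG Hpos.
  assert (Hodd : forall x, (x = a \/ x = b) -> x <> ω₀ ->
                 forall n, 0 <= G (hsigma_iter q w (2 * n + 1) x)).
  { intros x Hx hx n. apply Hpos; [|exact (hsigma_iter_neq_omega0 _ _ hx)].
    destruct Hx as [->| ->]; [left | right]; left; exists n; reflexivity. }
  unfold hahn_int.
  destruct (Req_EM_T a ω₀) as [Ea|Na]; [|destruct (Req_EM_T b ω₀) as [Eb|Nb]].
  - assert (Nb : b <> ω₀) by lra.
    pose proof (hahn_int_from_sign G b (HG b) (Hodd b (or_intror eq_refl) Nb)).
    rewrite Ea, hahn_int_from_omega0. nra.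
  - pose proof (hahn_int_from_sign G a (HG a) (Hodd a (or_introl eq_refl) Na)).
    rewrite Eb, hahn_int_from_omega0. nra.
  - destruct (qw_set_even_shift c a b hca hcb Na Nb) as [j [Ea|Eb]].
    + pose proof (hahn_int_from_sub_hsigma_iter_sign G b j HG (Hodd b (or_intror eq_refl) Nb)).
      pose proof (hsigma_iter_between (2 * j) b).
      rewrite <- Ea in *. assert (ω₀ < b) by (destruct (Rle_dec b ω₀); lra). nra.
    + pose proof (hahn_int_from_sub_hsigma_iter_sign G a j HG (Hodd a (or_introl eq_refl) Na)).
      pose proof (hsigma_iter_between (2 * j) a).
      rewrite <- Eb in *. assert (a < ω₀) by (destruct (Rle_dec ω₀ a); lra). nra.
Qed.

Lemma hahn_int_le_of_hahn_D a b c (F1 F2 h : R -> R) :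
  a < b -> qw_set q w c a -> qw_set q w c b ->
  continuous F1 ω₀ -> continuous F2 ω₀ -> continuous h ω₀ -> h a = h b ->
  (forall t, qw_set2 q w a b t -> t <> ω₀ -> F2 t + hahn_D q w h t <= F1 t) ->
  hahn_int q w a b F2 <= hahn_int q w a b F1.
Proof.
  intros hab hca hcb HF1 HF2 Hh Ehab Hle.
  assert (HF : hahn_integrable (fun t => F1 t - F2 t))
    by (apply hahn_integrable_minus; apply hahn_integrable_continuous; assumption).
  assert (HDh : hahn_integrable (hahn_D q w h)) by (apply hahn_integrable_hahn_D, Hh).
  assert (H : 0 <= hahn_int q w a b (fun t => (F1 t - F2 t) - hahn_D q w h t)).
  { apply (hahn_int_nonneg a b c); try assumption.
    - exact (hahn_integrable_minus _ _ HF HDh).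
    - intros t Ht Hn. specialize (Hle t Ht Hn). lra. }
  rewrite (hahn_int_minus a b (fun t => F1 t - F2 t) _ HF HDh),
    (hahn_int_minus a b F1 F2), hahn_int_hahn_D in H by
    (try apply hahn_integrable_continuous; assumption).
  lra.
Qed.

Lemma is_interval_hsigma_iter (I : R -> Prop) k x :
  is_interval I -> I ω₀ -> I x -> I (hsigma_iter q w k x).
Proof.
  intros hI h0 hx. destruct (hsigma_iter_between k x) as [Hle Hge].
  destruct (Rle_dec x ω₀) as [Hx|Hx].
  - exact (hI _ _ _ hx h0 (Hle Hx)).
  - exact (hI _ _ _ h0 hx (Hge ltac:(lra))).
Qed.

Lemma qw_set2_in_interval (I : R -> Prop) a b t :
  is_interval I -> I ω₀ -> I a -> I b -> qw_set2 q w a b t -> I t.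
Proof.
  intros hI h0 ha hb [[[n ->] | ->] | [[n ->] | ->]]; auto; apply is_interval_hsigma_iter; auto.
Qed.

Lemma Y1_continuous a b y : Y1 q w a b y -> continuous y ω₀.
Proof. intros (_ & _ & _ & Hc & _). exact Hc. Qed.

Lemma functional_le_of_euler_lagrange a b c alpha beta L (p g u v : R -> R) :
  a < b -> qw_set q w c a -> qw_set q w c b ->
  admissible q w a b alpha beta u -> admissible q w a b alpha beta v ->
  continuous (lag_comp q w L u) ω₀ -> continuous (lag_comp q w L v) ω₀ -> continuous g ω₀ ->
  (forall t, qw_set2 q w a b t -> t <> ω₀ -> p t = hahn_D q w (fun s => g (σ s)) t) ->
  (forall t, qw_set2 q w a b t -> t <> ω₀ ->
     lag_comp q w L v t + p t * (u (σ t) - v (σ t)) + g t * (hahn_D q w u t - hahn_D q w v t)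
       <= lag_comp q w L u t) ->
  functional q w a b L v <= functional q w a b L u.
Proof.
  intros hab hca hcb hu hv HLu HLv Hg Hp Hle.
  apply (hahn_int_le_of_hahn_D a b c _ _ (fun s => g (σ s) * (u s - v s))); try assumption.
  - apply (continuous_mult (fun s => g (σ s)) (fun s => u s - v s)).
    + apply continuous_comp_hsigma, Hg.
    + apply (continuous_minus u v); eapply Y1_continuous; [apply hu | apply hv].
  - destruct hu as (_ & -> & ->), hv as (_ & -> & ->). ring.
  - intros t Ht Hn.
    rewrite (hahn_D_mult (fun s => g (σ s)) (fun s => u s - v s)), hahn_D_minus,
      hsigma_hsigma_inv, <- Hp by assumption.
    specialize (Hle t Ht Hn). lra.
Qed.

End HahnCalculus.

Lemma jointly_convex_ge I L t u v u' v' : jointly_convex I L -> I t ->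
  d2L L t u v * (u' - u) + d3L L t u v * (v' - v) <= L t u' v' - L t u v.
Proof.
  intros [_ HL] Ht. specialize (HL t u v (u' - u) (v' - v) Ht).
  replace (u + (u' - u)) with u' in HL by ring.
  replace (v + (v' - v)) with v' in HL by ring.
  lra.
Qed.

Lemma jointly_concave_le I L t u v u' v' : jointly_concave I L -> I t ->
  L t u' v' - L t u v <= d2L L t u v * (u' - u) + d3L L t u v * (v' - v).
Proof.
  intros [_ HL] Ht. specialize (HL t u v (u' - u) (v' - v) Ht).
  replace (u + (u' - u)) with u' in HL by ring.
  replace (v + (v' - v)) with v' in HL by ring.
  exact HL.
Qed.

Theorem theorem3p11
  (q w : R) (I : R -> Prop) (alpha beta a b c : R) (L : R -> R -> R -> R)
  (hq : 0 < q < 1) (hw : 0 <= w)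
  (hI : is_interval I) (hI0 : I (omega0 q w))
  (ha : I a) (hb : I b) (hab : a < b) (hc : I c)
  (hac : qw_set q w c a) (hbc : qw_set q w c b)
  (H1 : forall t, I t -> C1_in_uv L t)
  (H2 : forall y, admissible q w a b alpha beta y ->
          continuous (lag_comp q w L y) (omega0 q w))
  (H3 : forall y, admissible q w a b alpha beta y ->
          Y1 q w a b (fun t => d2L L t (y (hsigma q w t)) (hahn_D q w y t)) /\
          Y1 q w a b (fun t => d3L L t (y (hsigma q w t)) (hahn_D q w y t)))
  (ystar : R -> R) (hys : admissible q w a b alpha beta ystar)
  (EL : forall t, qw_set2 q w a b t ->
          d2L L t (ystar (hsigma q w t)) (hahn_D q w ystar t) =
          hahn_D q w (fun tau => d3L L (hsigma q w tau)
                                   (ystar (hsigma q w (hsigma q w tau)))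
                                   (hahn_D q w ystar (hsigma q w tau))) t) :
  (jointly_convex I L ->
     forall y, admissible q w a b alpha beta y ->
       functional q w a b L ystar <= functional q w a b L y) /\
  (jointly_concave I L ->
     forall y, admissible q w a b alpha beta y ->
       functional q w a b L ystar >= functional q w a b L y).
Proof.
  set (p := fun t => d2L L t (ystar (hsigma q w t)) (hahn_D q w ystar t)).
  set (g := fun t => d3L L t (ystar (hsigma q w t)) (hahn_D q w ystar t)).
  assert (Hg : continuous g (omega0 q w)) by exact (Y1_continuous q w _ _ _ (proj2 (H3 _ hys))).
  assert (HI : forall t, qw_set2 q w a b t -> I t)
    by (intros t; apply (qw_set2_in_interval q w hq); assumption).
  split.
  - intros Hconv y hy.
    apply (functional_le_of_euler_lagrange q w hq a b c alpha beta L p g y ystar); auto.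
    { intros t Ht _. exact (EL t Ht). }
    intros t Ht _.
    pose proof (jointly_convex_ge I L t (ystar (hsigma q w t)) (hahn_D q w ystar t)
                  (y (hsigma q w t)) (hahn_D q w y t) Hconv (HI t Ht)).
    unfold lag_comp, p, g. lra.
  - intros Hconc y hy. apply Rle_ge.
    apply (functional_le_of_euler_lagrange q w hq a b c alpha beta L p g ystar y); auto.
    { intros t Ht _. exact (EL t Ht). }
    intros t Ht _.
    pose proof (jointly_concave_le I L t (ystar (hsigma q w t)) (hahn_D q w ystar t)
                  (y (hsigma q w t)) (hahn_D q w y t) Hconc (HI t Ht)).
    unfold lag_comp, p, g. lra.
Qed.
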